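(* Let $\Lambda$ be a real interval, let $w_i\ge0$ with $\sum_iw_i=1$, and let $\psi$ be the weighted-proportional-cumulative with weights $\mathbf w$. Let $p_1,\dots,p_n\in\mathcal P$ have continuous CDFs $P_1,\dots,P_n$ with densities (also denoted $p_i$) and suppose $P_1\ge P_2\ge\dots\ge P_n$ pointwise. Writing $W_i=\sum_{k\le i}w_k$ ($W_0=0$), the output $\psi(\mathbf p)$ has density given (almost everywhere) by $$\psi(\mathbf p)(a)=\begin{cases}p_i(a)&\text{if }W_{i-1}\le P_i(a)<W_i\text{ for some }i\in N,\\ 0&\text{otherwise.}\end{cases}$$
   Context: $N=\{1,\dots,n\}$; $\mathcal P$ the Borel probability measures on $\Lambda$, $\mathcal C$ the CDFs, $\pi(p)(a)=p(\{x\in\Lambda:x\le a\})$. The weighted-proportional-cumulative with weights $\mathbf w$ is the PAF $\psi:\mathcal P^N\to\mathcal P$ whose associated CAF $\Psi$ (defined by $\Psi(\pi(p_1),\dots,\pi(p_n))=\pi(\psi(p_1,\dots,p_n))$) is $\Psi(\mathbf P)(a)=\mu_{\mathbf w}(P_1(a),\dots,P_n(a))$, where $\mu_{\mathbf w}(\mathbf r)=\sup\{y\in[0,1]:\sum_{i:\,r_i\ge y}w_i\ge y\}$. *)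

From HB Require Import structures.
From mathcomp Require Import all_boot all_order all_algebra.
From mathcomp Require Import all_classical all_reals all_analysis.
Set Implicit Arguments. Unset Strict Implicit. Unset Printing Implicit Defensive.
Import Order.TTheory GRing.Theory Num.Theory.
Local Open Scope classical_set_scope.
Local Open Scope ring_scope.

(* Borel probability measures on Lambda are represented as Borel probability
   measures on R concentrated on Lambda. *)
Definition concentrated (R : realType) (Lam : set R)
  (p : set (measurableTypeR R) -> \bar R) : Prop :=
  p (~` Lam) = 0%E.

Definition cdfL (R : realType) (p : set (measurableTypeR R) -> \bar R) (a : R) : R :=
  fine (p [set x : R | x <= a]).

Definition mu_w (R : realType) (n : nat) (w : 'I_n -> R) (r : 'I_n -> R) : R :=
  sup [set y : R | 0 <= y <= 1 /\ y <= \sum_(i < n | y <= r i) w i].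

Definition wpc_caf (R : realType) (n : nat) (w : 'I_n -> R)
  (P : 'I_n -> R -> R) (a : R) : R := mu_w w (fun i => P i a).

(* W_i = sum_{k <= i} w_k  (with 0-based indices: Wle i = sum_{k <= i},
   Wlt i = sum_{k < i} = W_{i-1}) *)
Definition Wle (R : realType) (n : nat) (w : 'I_n -> R) (i : 'I_n) : R :=
  \sum_(k < n | (k <= i)%N) w k.
Definition Wlt (R : realType) (n : nat) (w : 'I_n -> R) (i : 'I_n) : R :=
  \sum_(k < n | (k < i)%N) w k.

Definition has_density (R : realType) (Lam : set R)
  (p : set (measurableTypeR R) -> \bar R) (f : R -> R) : Prop :=
  measurable_fun setT f /\ (forall x, 0 <= f x) /\
  forall A : set (measurableTypeR R), measurable A -> A `<=` Lam ->
    p A = (\int[lebesgue_measure]_(x in A) (f x)%:E)%E.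

From HB Require Import structures.
From mathcomp Require Import all_boot all_order all_algebra.
From mathcomp Require Import all_classical all_reals all_analysis.
From mathcomp Require Import unstable lra measurable_realfun.
Import Order.TTheory GRing.Theory Num.Theory.
Import numFieldNormedType.Exports.
Local Open Scope classical_set_scope.
Local Open Scope ring_scope.

(* For nonincreasing r_1 >= ... >= r_n and cumulative weights W_i, the
   supremum mu_w(r) is max_i min(r_i, W_i), and this maximum telescopes into
   sum_i (min(r_i, W_i) - min(r_i, W_(i-1))): the i-th term is the length of
   [W_(i-1), W_i] below r_i, and these pieces fill an initial segment of [0, 1].
   Take r_i = P_i(b). As P_i is continuous, P_i pushes p_i forward to the uniform
   law, so the i-th term is the p_i-mass of (-oo, b] within the band
   {W_(i-1) <= P_i < W_i}. Hence psi(p) has the same CDF as the mixture of the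
   p_i restricted to their bands, so the two measures coincide, and the mixture
   has density sum_i 1_(band i) p_i. The bands are disjoint because the P_i
   are ordered. *)

Lemma sumr_le_pred (R : numDomainType) (I : finType) (P Q : pred I) (F : I -> R) :
  (forall i, 0 <= F i) -> (forall i, P i -> Q i) ->
  \sum_(i | P i) F i <= \sum_(i | Q i) F i.
Proof.
move=> F_ge0 PQ; rewrite big_mkcond [leRHS]big_mkcond /=.
by apply: ler_sum => i _; case: ifP => [/PQ->//|_]; case: ifP.
Qed.

Lemma bigmax_ord_recr {d} {T : orderType d} (x : T) m (F : nat -> T) :
  \big[Order.max/x]_(i < m.+1) F i = Order.max (\big[Order.max/x]_(i < m) F i) (F m).
Proof.
apply/le_anti/andP; split.
  apply: bigmax_le => [|i _]; first by rewrite le_max bigmax_ge_id.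
  have [im|mi] := ltnP i m; first by rewrite le_max (le_bigmax _ _ (Ordinal im)).
  have -> : nat_of_ord i = m by apply/eqP; rewrite eqn_leq mi -ltnS ltn_ord.
  by rewrite le_max lexx orbT.
rewrite ge_max (le_bigmax _ _ ord_max) andbT.
apply: bigmax_le => [|i _]; first exact: bigmax_ge_id.
exact: (le_bigmax _ _ (widen_ord (leqnSn m) i)).
Qed.

Section min_increments.
Variables (R : realDomainType) (w r : nat -> R).
Hypothesis w_ge0 : forall k, 0 <= w k.
Hypothesis r_noninc : forall i j, (i <= j)%N -> r j <= r i.

Local Notation W m := (\sum_(k < m) w k).
Local Notation M m := (\big[Num.max/0]_(i < m) Num.min (r i) (W i.+1)).

Lemma partial_sum_le m m' : (m <= m')%N -> W m <= W m'.
Proof.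
move=> mm'; rewrite -!(big_mkord xpredT) [leRHS](@big_cat_nat _ _ _ m) //=.
by rewrite lerDl sumr_ge0.
Qed.

Lemma bigmax_min_le_partial_sum m : M m <= W m.
Proof.
apply: bigmax_le => [|i _]; first exact: sumr_ge0.
by rewrite ge_min partial_sum_le ?orbT.
Qed.

Lemma min_partial_sum_le_bigmax m : Num.min (r m) (W m) <= M m.
Proof.
case: m => [|m]; first by rewrite !big_ord0 ge_min lexx orbT.
apply: le_trans (le_bigmax _ _ ord_max); rewrite /= le_min !ge_min lexx orbT andbT.
by rewrite r_noninc.
Qed.

Lemma sum_min_increments m :
  \sum_(i < m) (Num.min (r i) (W i.+1) - Num.min (r i) (W i)) = M m.
Proof.
elim: m => [|m IH]; first by rewrite !big_ord0.
rewrite big_ord_recr (bigmax_ord_recr _ _ (fun i => Num.min (r i) (W i.+1))) /= IH.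
have WS : W m <= W m.+1 by rewrite partial_sum_le.
move: (bigmax_min_le_partial_sum m) (min_partial_sum_le_bigmax m) => MW.
have [rW rWM|Wr WM] := leP (r m) (W m).
- by rewrite (min_l (le_trans rW WS)) subrr addr0 max_l.
- have -> : M m = W m by apply/le_anti; rewrite MW WM.
  by rewrite addrCA subrr addr0 max_r // le_min (ltW Wr).
Qed.

End min_increments.

Section cumulative_weights.
Context {R : realType} {n : nat} {w : 'I_n -> R}.
Hypothesis w_ge0 : forall i, 0 <= w i.

Lemma Wlt_ge0 i : 0 <= Wlt w i.
Proof. exact: sumr_ge0. Qed.

Lemma Wlt_le_Wle i : Wlt w i <= Wle w i.
Proof. by apply: sumr_le_pred => // k; apply: ltnW. Qed.

Lemma Wle_le_Wlt {i j : 'I_n} : (i < j)%N -> Wle w i <= Wlt w j.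
Proof. by move=> ij; apply: sumr_le_pred => // k ki; apply: leq_ltn_trans ij. Qed.

Lemma WleE i : Wle w i = Wlt w i + w i.
Proof.
rewrite /Wle (bigD1 i) //= addrC; congr (_ + _).
by apply: eq_bigl => k; rewrite ltn_neqAle andbC.
Qed.

Lemma Wle_le_sum i : Wle w i <= \sum_k w k.
Proof. exact: sumr_le_pred. Qed.

Lemma sum_min_increments_ord (r : 'I_n -> R) :
  (forall i j : 'I_n, (i <= j)%N -> r j <= r i) ->
  \sum_i (Num.min (r i) (Wle w i) - Num.min (r i) (Wlt w i)) =
  \big[Num.max/0]_i Num.min (r i) (Wle w i).
Proof.
case: n w r w_ge0 => [|m] w' r w'_ge0 r_noninc; first by rewrite !big_ord0.
pose wn k := w' (inord k); pose rn k := r (inord (minn k m)).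
have wnE (i : 'I_m.+1) : wn i = w' i by rewrite /wn inord_val.
have rnE (i : 'I_m.+1) : rn i = r i by rewrite /rn (minn_idPl _) ?inord_val // -ltnS.
have partial_sum k : (k <= m.+1)%N -> \sum_(j < k) wn j = \sum_(j < m.+1 | (j < k)%N) w' j.
  by move=> km; rewrite (big_ord_widen _ wn km); apply: eq_bigr => j _; rewrite wnE.
have rn_noninc i j : (i <= j)%N -> rn j <= rn i.
  move=> ij; apply: r_noninc; rewrite !inordK ?ltnS ?geq_minr //.
  by rewrite leq_min geq_minr andbT (leq_trans (geq_minl _ _) ij).
have Wle_wn (i : 'I_m.+1) : \sum_(k < i.+1) wn k = Wle w' i by rewrite partial_sum.
have Wlt_wn (i : 'I_m.+1) : \sum_(k < i) wn k = Wlt w' i by rewrite partial_sum // ltnW.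
transitivity (\sum_(i < m.+1)
  (Num.min (rn i) (\sum_(k < i.+1) wn k) - Num.min (rn i) (\sum_(k < i) wn k))).
  by apply: eq_bigr => i _; rewrite rnE Wle_wn Wlt_wn.
rewrite (@sum_min_increments _ wn rn (fun k => w'_ge0 _) rn_noninc).
apply: eq_bigr => i _.
by rewrite rnE Wle_wn.
Qed.

Lemma mu_w_bigmax (r : 'I_n -> R) : \sum_i w i = 1 ->
  (forall i j : 'I_n, (i <= j)%N -> r j <= r i) ->
  mu_w w r = \big[Num.max/0]_i Num.min (r i) (Wle w i).
Proof.
move=> w_sum1 r_noninc; rewrite /mu_w.
set E := [set y | _]; set M := \big[_/_]_i _.
have E0 : E 0 by split; [rewrite lexx ler01 | exact: sumr_ge0].
have E_sup : has_sup E by split; [exists 0 | exists 1 => y [/andP[_ ->]]].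
have M_ub : ubound E M.
  move=> y [_ y_le].
  have [[i0 yi0]|no_i] := pselect (exists i, y <= r i); last first.
    have sum0 : \sum_(i | y <= r i) w i = 0 by apply: big1 => i yi; case: no_i; exists i.
    by rewrite sum0 in y_le; apply: le_trans y_le (bigmax_ge_id _ _ _ _).
  have [k yk k_max] := @arg_maxnP _ i0 (fun i => y <= r i) val yi0.
  apply: le_trans (le_bigmax _ _ k); rewrite le_min yk (le_trans y_le) //.
  exact: sumr_le_pred.
apply/le_anti; rewrite ge_sup //=; last by exists 0.
apply: bigmax_le => [|i _]; first exact: sup_upper_bound.
have [a_le0|a_gt0] := leP (Num.min (r i) (Wle w i)) 0.
  exact: le_trans a_le0 (sup_upper_bound E_sup E0).
apply: sup_upper_bound => //; split.
  by rewrite (ltW a_gt0) ge_min -w_sum1 Wle_le_sum orbT.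
rewrite ge_min; apply/orP; right; apply: sumr_le_pred => // j ji.
by rewrite ge_min (r_noninc _ _ ji).
Qed.

End cumulative_weights.

Section measure_of_cdf.
Context {R : realType}.
Implicit Types (m : {measure set (measurableTypeR R) -> \bar R}) (G : R -> R).

Lemma measure_itv_oc_cdf {m G} : (forall x, m `]-oo, x]%classic = (G x)%:E) ->
  forall {a b}, a <= b -> m `]a, b]%classic = (G b - G a)%:E.
Proof.
move=> mG a b ab.
have -> : `]a, b]%classic = `]-oo, b] `\` `]-oo, a] :> set (measurableTypeR R).
  by rewrite -[RHS]setCK setCD setCitvl setUC -[LHS]setCK setCitv.
rewrite measureD //=; last by rewrite mG ltry.
by rewrite setIidr ?mG ?EFinB //; exact: subset_itvl.
Qed.

Lemma measure_eq_of_cdf m1 m2 G :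
  (forall x, m1 `]-oo, x]%classic = (G x)%:E) ->
  (forall x, m2 `]-oo, x]%classic = (G x)%:E) ->
  forall A, measurable A -> m1 A = m2 A.
Proof.
move=> m1G m2G A mA.
apply: (measure_unique (R.-ocitv.-measurable : set (set (measurableTypeR R)))
   (fun k : nat => `]-k%:R, k%:R]%classic)) => //.
- by move=> X Y; exact: measurableI.
- by move=> k; exact: is_ocitv.
- apply/seteqP; split => // y _; exists (Num.Def.trunc `|y|).+1 => //=.
  have := truncnS_gt `|y|; rewrite ltr_norml => /andP[y_gt y_lt].
  by rewrite in_itv /= y_gt (ltW y_lt).
- move=> _ [[a b] _ <-] /=; have [ab|ba] := leP a b.
    by rewrite (measure_itv_oc_cdf m1G ab) (measure_itv_oc_cdf m2G ab).
  by rewrite set_itv_ge ?measure0 // bnd_simp -leNgt ltW.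
- move=> k; rewrite (measure_itv_oc_cdf m1G) ?ltry //.
  by rewrite (@le_trans _ _ 0) ?oppr_le0.
Qed.

End measure_of_cdf.

Lemma bigcap_itv_oc_center (R : realType) (x : R) :
  \bigcap_k `]x - k.+1%:R^-1, x + k.+1%:R^-1]%classic = [set x].
Proof.
apply/seteqP; split => [y yB|y -> k _]; last first.
  by rewrite /= in_itv /= ltrBlDr ltrDl invr_gt0 ltr0n lerDl invr_ge0 ler0n.
have y_le : `]-oo, x]%classic y.
  rewrite (itvNycEbigcap false) => k _.
  by have := yB k I; rewrite /= !in_itv /= => /andP[].
have y_ge : `[x, +oo[%classic y.
  rewrite itvcyEbigcap => k _.
  by have := yB k I; rewrite /= !in_itv /= andbT => /andP[].
by apply/le_anti; move: y_le y_ge; rewrite /= !in_itv /= andbT => -> ->.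
Qed.

Section cdfL_probability.
Context {R : realType} (p : probability (measurableTypeR R) R).
Local Notation F := (cdfL p).

Lemma cdfLE a : p `]-oo, a]%classic = (F a)%:E.
Proof. by rewrite /cdfL set_itvNyc fineK // fin_num_measure //= -set_itvNyc. Qed.

Lemma cdfL_ge0 a : 0 <= F a.
Proof. by rewrite -lee_fin -cdfLE measure_ge0. Qed.

Lemma cdfL_le1 a : F a <= 1.
Proof. by rewrite -lee_fin -cdfLE probability_le1. Qed.

Lemma cdfL_nondecreasing : {homo F : x y / x <= y}.
Proof. by move=> x y xy; rewrite -lee_fin -!cdfLE le_measure ?inE //; exact: subitvPr. Qed.

Lemma measurable_cdfL_lt c : measurable [set x : measurableTypeR R | F x < c].
Proof.
apply: is_interval_measurable => x y _ /= Fy z /andP[_ zy] /=.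
exact: le_lt_trans (cdfL_nondecreasing _ _ zy) Fy.
Qed.

(* The library states the limits of a CDF for random variables; view the
   identity as one. *)
Let idTR : measurableTypeR R -> R := idfun.
#[local] HB.instance Definition _ :=
  @isMeasurableFun.Build _ _ _ _ idTR (@measurable_id _ _ setT).

Lemma exists_cdfL_lt c : 0 < c -> exists x, F x < c.
Proof.
move=> c_gt0; have := cvg_cdfNy0 (idTR : {RV p >-> R}).
have -> : cdf (idTR : {RV p >-> R}) = fun r => (F r)%:E.
  by apply/funext => r; rewrite /cdf /distribution /pushforward preimage_id cdfLE.
move/fine_cvgP => [_ /(cvgr_lt 0)/(_ _ c_gt0) Fc].
by have [x] := filter_ex Fc; exists x.
Qed.

Hypothesis p_atomless : forall x, p [set x] = 0%E.

Lemma cdfL_oscillation_cvg0 x :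
  F (x + k.+1%:R^-1) - F (x - k.+1%:R^-1) @[k --> \oo] --> 0.
Proof.
pose B k := `]x - k.+1%:R^-1, x + k.+1%:R^-1]%classic : set (measurableTypeR R).
have B_noninc : nonincreasing_seq B.
  move=> i j ij; apply/subsetPset/subset_itv; rewrite bnd_simp.
    by rewrite lerB // lef_pV2 ?posrE // ler_nat.
  by rewrite lerD2l lef_pV2 ?posrE // ler_nat.
have pB : p \o B = fun k => (F (x + k.+1%:R^-1) - F (x - k.+1%:R^-1))%:E.
  apply/funext => k; apply: (measure_itv_oc_cdf cdfLE).
  by rewrite lerBlDr -addrA lerDl ltW.
suff : (fun k => (F (x + k.+1%:R^-1) - F (x - k.+1%:R^-1))%:E) @ \oo --> 0%E.
  by move/fine_cvgP => [].
rewrite -pB -(p_atomless x) -bigcap_itv_oc_center.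
apply: nonincreasing_cvg_mu => //.
- by apply: (le_lt_trans (probability_le1 p _)); [exact: measurable_itv | rewrite ltey].
- by move=> k; exact: measurable_itv.
- by rewrite bigcap_itv_oc_center; exact: measurable_set1.
Qed.

Lemma cdfL_continuous : continuous F.
Proof.
move=> x; apply/cvgrPdist_lt => e e_gt0.
have [k /= osc_lt] := filter_ex (cvgr_lt 0 (cdfL_oscillation_cvg0 x) _ e_gt0).
have d_gt0 : 0 < k.+1%:R^-1 :> R by rewrite invr_gt0.
apply/nbhs_ballP; exists k.+1%:R^-1 => //= y.
rewrite /ball /= ltr_distlC => /andP[y_gt y_lt].
have := cdfL_nondecreasing _ _ (ltW y_gt); have := cdfL_nondecreasing _ _ (ltW y_lt).
have : F (x - k.+1%:R^-1) <= F x by apply: cdfL_nondecreasing; rewrite gerBl ltW.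
have : F x <= F (x + k.+1%:R^-1) by apply: cdfL_nondecreasing; rewrite lerDl ltW.
by rewrite ltr_norml; lra.
Qed.

Lemma cdfL_IVT v b : 0 < v -> v <= F b -> exists2 s, s <= b & F s = v.
Proof.
move=> v_gt0 vFb; have [x0 Fx0v] := exists_cdfL_lt _ v_gt0.
have x0b : x0 <= b.
  rewrite leNgt; apply: contraTN Fx0v => /ltW/cdfL_nondecreasing.
  by rewrite -leNgt => /(le_trans vFb).
have Fx0b := cdfL_nondecreasing _ _ x0b.
have v_between : Num.min (F x0) (F b) <= v <= Num.max (F x0) (F b).
  by rewrite (min_l Fx0b) (max_r Fx0b) (ltW Fx0v) vFb.
have [s] := IVT x0b (continuous_subspaceT cdfL_continuous) v_between.
by rewrite in_itv /= => /andP[_ sb] Fs; exists s.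
Qed.

Lemma measure_cdfL_lt b c : 0 <= c <= F b -> p [set x | F x < c] = c%:E.
Proof.
case/andP; rewrite le_eqVlt => /predU1P[<- _|c_gt0 cFb].
  rewrite (_ : [set x | F x < 0] = set0) ?measure0 //.
  by apply/seteqP; split => x //=; rewrite ltNge cdfL_ge0.
have [s _ Fs] := cdfL_IVT _ _ c_gt0 cFb.
have p_fin : p [set x | F x < c] \is a fin_num.
  by apply: fin_num_measure; exact: measurable_cdfL_lt.
rewrite -(fineK p_fin); congr EFin.
apply/le_anti/andP; split.
  rewrite -lee_fin fineK // -Fs -cdfLE.
  apply: le_measure; rewrite ?inE; [exact: measurable_cdfL_lt | exact: measurable_itv |].
  move=> y /= Fyc.
  rewrite in_itv /= leNgt; apply: contraTN Fyc => /ltW/cdfL_nondecreasing.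
  by rewrite Fs -leNgt.
apply/ler_ltP => c' c'c; have [c'_le0|c'_gt0] := leP c' 0.
  by rewrite (le_trans c'_le0) // fine_ge0 // measure_ge0.
have [s' _ Fs'] := cdfL_IVT _ _ c'_gt0 (le_trans (ltW c'c) cFb).
rewrite -lee_fin fineK // -Fs' -cdfLE.
apply: le_measure; rewrite ?inE; [exact: measurable_itv | exact: measurable_cdfL_lt |].
by move=> y; rewrite /= in_itv /= => /cdfL_nondecreasing; rewrite Fs' => /le_lt_trans; apply.
Qed.

Lemma measure_le_cdfL_lt b c : 0 <= c ->
  p ([set x | x <= b] `&` [set x | F x < c]) = (Num.min (F b) c)%:E.
Proof.
move=> c_ge0; have [Fbc|cFb] := ltP (F b) c.
  rewrite -cdfLE set_itvNyc; congr (p _).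
  apply/seteqP; split=> [y []//|y /= yb]; split=> //=.
  exact: le_lt_trans (cdfL_nondecreasing _ _ yb) Fbc.
rewrite -(measure_cdfL_lt b c) ?c_ge0 //; congr (p _).
apply/seteqP; split=> [y []//|y /= Fyc]; split=> //=.
rewrite leNgt; apply: contraTN Fyc => /ltW/cdfL_nondecreasing Fby.
by rewrite -leNgt (le_trans cFb Fby).
Qed.

End cdfL_probability.

Definition cdf_band {R : realType} (Lam : set R) (F : R -> R) (c1 c2 : R) : set R :=
  [set x | Lam x /\ c1 <= F x < c2].

Section concentrated_probability.
Context {R : realType} {Lam : set R} {p : probability (measurableTypeR R) R}.
Hypotheses (Lam_itv : is_interval Lam) (p_conc : concentrated Lam p).
Local Notation F := (cdfL p).

Let Lam_measurable : measurable Lam.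
Proof. exact: is_interval_measurable. Qed.

Lemma measure_setIl_concentrated (A : set (measurableTypeR R)) :
  measurable A -> p (A `&` Lam) = p A.
Proof.
move=> mA; rewrite [RHS](measureDI p mA Lam_measurable).
rewrite [X in _ = (X + _)%E](_ : _ = 0%E) ?add0e //.
apply/le_anti; rewrite measure_ge0 andbT -p_conc le_measure ?inE //.
- exact: measurableD.
- exact: measurableC.
Qed.

Lemma cdfL_above b : (forall x, Lam x -> x <= b) -> F b = 1.
Proof.
move=> Lam_le; apply/le_anti; rewrite cdfL_le1 /= -lee_fin -cdfLE.
have <- : p Lam = 1%E.
  by rewrite -[Lam]setTI measure_setIl_concentrated // probability_setT.
apply: le_measure; rewrite ?inE; [exact: Lam_measurable | exact: measurable_itv |].
by move=> y Ly; rewrite /= in_itv /= Lam_le.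
Qed.

Lemma cdfL_below b : (forall x, Lam x -> b < x) -> F b = 0.
Proof.
move=> Lam_gt; apply/le_anti; rewrite cdfL_ge0 andbT -lee_fin -cdfLE.
rewrite -measure_setIl_concentrated; last exact: measurable_itv.
rewrite (_ : _ `&` _ = set0) ?measure0 //; apply/seteqP; split => // y [].
by rewrite /= in_itv /= => yb /Lam_gt; rewrite ltNge yb.
Qed.

Lemma density_atomless f : has_density Lam p f -> forall x, p [set x] = 0%E.
Proof.
move=> [f_meas [_ p_int]] x; have [Lx|nLx] := pselect (Lam x).
  rewrite p_int //; last by move=> y ->.
  apply: null_set_integral => //; last exact: lebesgue_measure_set1.
  by apply/measurable_EFinP; exact: measurable_funTS.
apply/le_anti; rewrite measure_ge0 andbT -p_conc le_measure ?inE //.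
- exact: measurableC.
- by move=> y ->.
Qed.

Lemma measurable_cdf_band c1 c2 : measurable (cdf_band Lam F c1 c2).
Proof.
apply: is_interval_measurable => x y [Lx /andP[Fx1 Fx2]] [Ly /andP[Fy1 Fy2]] z /andP[xz zy].
split; first by apply: (Lam_itv x y) => //; rewrite xz zy.
by rewrite (le_trans Fx1 (cdfL_nondecreasing _ _ _ xz)) (le_lt_trans (cdfL_nondecreasing _ _ _ zy)).
Qed.

Lemma measure_cdf_band b c1 c2 : (forall x, p [set x] = 0%E) -> 0 <= c1 <= c2 ->
  p (`]-oo, b]%classic `&` cdf_band Lam F c1 c2) =
  (Num.min (F b) c2 - Num.min (F b) c1)%:E.
Proof.
move=> p_atomless /andP[c1_ge0 c12].
pose U c := [set x : measurableTypeR R | x <= b] `&` [set x | F x < c].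
have mU c : measurable (U c).
  apply: measurableI; last exact: measurable_cdfL_lt.
  by rewrite -set_itvNyc; exact: measurable_itv.
have -> : `]-oo, b]%classic `&` cdf_band Lam F c1 c2 = (U c2 `\` U c1) `&` Lam.
  apply/seteqP; split => y /=.
    rewrite in_itv /= => -[yb [Ly /andP[Fy1 Fy2]]]; split => //; split => //.
    by rewrite /U => -[_ /=]; rewrite ltNge Fy1.
  move=> [[[yb Fy2] /= nU1] Ly]; rewrite in_itv /= yb; split => //; split => //.
  by rewrite Fy2 andbT leNgt; apply/negP => Fy1; apply: nU1.
rewrite measure_setIl_concentrated; last exact: measurableD.
rewrite measureD //; last by rewrite (le_lt_trans (probability_le1 p (mU c2))) ?ltry.
have -> : U c2 `&` U c1 = U c1.
  apply/seteqP; split => y; first by move=> [].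
  by move=> [yb Fy1]; split => //; split => //=; exact: lt_le_trans Fy1 c12.
rewrite EFinB; congr (_ - _)%E; apply: measure_le_cdfL_lt => //.
exact: le_trans c12.
Qed.

End concentrated_probability.

Section wpc_density.
Context {R : realType} (Lam : set R) {n : nat} (w : 'I_n.+1 -> R)
  (p : 'I_n.+1 -> probability (measurableTypeR R) R) (dens : 'I_n.+1 -> R -> R).
Hypotheses (Lam_itv : is_interval Lam) (w_ge0 : forall i, 0 <= w i)
  (w_sum1 : \sum_i w i = 1) (p_conc : forall i, concentrated Lam (p i))
  (p_dens : forall i, has_density Lam (p i) (dens i))
  (cdf_noninc : forall a, Lam a -> forall i j : 'I_n.+1, (i <= j)%N ->
     cdfL (p j) a <= cdfL (p i) a).
Local Notation F i := (cdfL (p i)).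
Local Notation band i := (cdf_band Lam (F i) (Wlt w i) (Wle w i)).

Lemma band_unique {i j a} : band i a -> band j a -> i = j.
Proof.
have band_lt k l : band k a -> band l a -> ~ (k < l)%N.
  move=> [La /andP[_ Fk]] [_ /andP[Fl _]] kl.
  have Fk_lt : F k a < Wlt w l := lt_le_trans Fk (Wle_le_Wlt w_ge0 kl).
  have := le_trans Fl (cdf_noninc _ La _ _ (ltnW kl)).
  by rewrite leNgt Fk_lt.
move=> ai aj; case: (ltngtP i j) => [ij|ji|/val_inj //].
- by case: (band_lt _ _ ai aj ij).
- by case: (band_lt _ _ aj ai ji).
Qed.

Definition band_density x := \sum_i \1_(band i) x * dens i x.

Lemma band_densityE i a : band i a -> band_density a = dens i a.
Proof.
move=> a_band; rewrite /band_density (bigD1 i) //= big1 ?addr0.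
  by rewrite indicE mem_set ?mul1r.
move=> j ji; rewrite indicE memNset ?mul0r // => a_bandj.
by move: ji; rewrite (band_unique a_bandj a_band) eqxx.
Qed.

Lemma band_density0 a : (forall i, ~ band i a) -> band_density a = 0.
Proof. by move=> no_band; apply: big1 => i _; rewrite indicE memNset ?mul0r. Qed.

Let band_measurable i : measurable (band i).
Proof. exact: measurable_cdf_band. Qed.

Definition band_mixture :=
  msum (fun k => mrestr (p (inord k)) (band_measurable (inord k))) n.+1.

Lemma band_mixtureE A : band_mixture A = \sum_i p i (A `&` band i).
Proof. by apply: eq_bigr => i _; rewrite /mrestr inord_val. Qed.

Let Phi b := \sum_i (Num.min (F i b) (Wle w i) - Num.min (F i b) (Wlt w i)).

Lemma band_mixture_cdf b : band_mixture `]-oo, b]%classic = (Phi b)%:E.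
Proof.
rewrite band_mixtureE /Phi -sumEFin; apply: eq_bigr => i _.
apply: measure_cdf_band => //; first exact: density_atomless (p_dens i).
by rewrite Wlt_ge0 // Wlt_le_Wle.
Qed.

Lemma has_density_band_mixture : has_density Lam band_mixture band_density.
Proof.
have term_meas i : measurable_fun setT (fun x => \1_(band i) x * dens i x).
  by apply: measurable_funM; [exact: measurable_indic | exact: (p_dens i).1].
have term_ge0 i x : 0 <= \1_(band i) x * dens i x.
  by rewrite mulr_ge0 ?indicE //; exact: (p_dens i).2.1.
split; first exact: measurable_sum.
split; first by move=> x; apply: sumr_ge0 => i _.
move=> A mA A_Lam; rewrite band_mixtureE.
under eq_integral do rewrite /band_density -sumEFin.
have term_measA i : measurable_fun A (fun x => (\1_(band i) x * dens i x)%:E).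
  by apply/measurable_EFinP; exact: measurable_funTS (term_meas i).
have term_geA i x : A x -> (0 <= (\1_(band i) x * dens i x)%:E)%E.
  by move=> _; rewrite lee_fin.
rewrite (ge0_integral_sum _ mA term_measA term_geA).
apply: eq_bigr => i _.
have mAI : measurable (A `&` band i) := measurableI _ _ mA (band_measurable i).
have AI_Lam : A `&` band i `<=` Lam by move=> x [Ax _]; exact: A_Lam.
rewrite (p_dens i).2.2 // integral_mkcondr; apply: eq_integral => x _.
by rewrite epatch_indic /= EFinM muleC.
Qed.

Lemma cdfL_wpcE {q : probability (measurableTypeR R) R} :
  concentrated Lam q -> (forall a, Lam a -> cdfL q a = wpc_caf w (fun i => F i) a) ->
  forall b, cdfL q b = Phi b.
Proof.
move=> q_conc q_cdf b; have [Lb|nLb] := pselect (Lam b).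
  have Fb_noninc : forall i j : 'I_n.+1, (i <= j)%N -> F j b <= F i b.
    exact: cdf_noninc.
  by rewrite q_cdf // /wpc_caf (mu_w_bigmax w_ge0) // -sum_min_increments_ord.
have [[x Lx xb]|no_x] := pselect (exists2 x, Lam x & x <= b).
  have Lam_le y : Lam y -> y <= b.
    move=> Ly; rewrite leNgt; apply: contra_notN nLb => b_lt_y.
    by apply: (Lam_itv x y) => //; rewrite xb ltW.
  rewrite (cdfL_above Lam_itv q_conc _ Lam_le) /Phi -w_sum1; apply: eq_bigr => i _.
  have Wle_le1 : Wle w i <= 1 by rewrite -w_sum1 Wle_le_sum.
  have Wlt_le1 : Wlt w i <= 1 := le_trans (Wlt_le_Wle w_ge0 i) Wle_le1.
  by rewrite (cdfL_above Lam_itv (p_conc i) _ Lam_le) (min_r Wle_le1) (min_r Wlt_le1)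
     WleE addrAC subrr add0r.
have Lam_gt y : Lam y -> b < y.
  by move=> Ly; rewrite ltNge; apply/negP => yb; apply: no_x; exists y.
rewrite (cdfL_below Lam_itv q_conc _ Lam_gt) /Phi big1 // => i _.
have Wle_ge0 : 0 <= Wle w i := le_trans (Wlt_ge0 w_ge0 i) (Wlt_le_Wle w_ge0 i).
by rewrite (cdfL_below Lam_itv (p_conc i) _ Lam_gt) (min_l Wle_ge0) (min_l (Wlt_ge0 w_ge0 i)) subrr.
Qed.

Lemma wpc_measure_eq_band_mixture {q : probability (measurableTypeR R) R} :
  concentrated Lam q -> (forall a, Lam a -> cdfL q a = wpc_caf w (fun i => F i) a) ->
  forall A, measurable A -> q A = band_mixture A.
Proof.
move=> q_conc q_cdf; apply: (measure_eq_of_cdf q band_mixture Phi) => b.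
  by rewrite -(cdfL_wpcE q_conc q_cdf) -cdfLE.
exact: band_mixture_cdf.
Qed.

Lemma wpc_has_band_density {q : probability (measurableTypeR R) R} :
  concentrated Lam q -> (forall a, Lam a -> cdfL q a = wpc_caf w (fun i => F i) a) ->
  has_density Lam q band_density.
Proof.
move=> q_conc q_cdf; have [g_meas [g_ge0 g_int]] := has_density_band_mixture.
split=> //; split=> // A mA A_Lam.
by rewrite (wpc_measure_eq_band_mixture q_conc q_cdf) // g_int.
Qed.

End wpc_density.

Theorem mainTheorem13 (R : realType) (Lam : set R) (n : nat)
  (w : 'I_n -> R) (p : 'I_n -> probability (measurableTypeR R) R)
  (dens : 'I_n -> R -> R) (q : probability (measurableTypeR R) R) :
  is_interval Lam ->
  (forall i, 0 <= w i) -> \sum_(i < n) w i = 1 ->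
  (forall i, concentrated Lam (p i)) ->
  (forall i, {within Lam, continuous (cdfL (p i))}) ->
  (forall i, has_density Lam (p i) (dens i)) ->
  (forall a, Lam a -> forall i j : 'I_n, (i <= j)%N -> cdfL (p j) a <= cdfL (p i) a) ->
  concentrated Lam q ->
  (forall a, Lam a -> cdfL q a = wpc_caf w (fun i => cdfL (p i)) a) ->
  exists g : R -> R, has_density Lam q g /\
    {ae lebesgue_measure, forall a : R, Lam a ->
       (forall i, Wlt w i <= cdfL (p i) a < Wle w i -> g a = dens i a) /\
       ((forall i, ~ (Wlt w i <= cdfL (p i) a < Wle w i)) -> g a = 0)}.
Proof.
(* Continuity of the CDFs is not assumed below: it follows from the densities. *)
case: n w p dens => [|n] w p dens Lam_itv w_ge0 w_sum1 p_conc _ p_dens cdf_noninc q_conc q_cdf.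
  by move: w_sum1; rewrite big_ord0 => /eqP; rewrite eq_sym oner_eq0.
exists (band_density Lam w p dens); split; first exact: wpc_has_band_density.
apply: aeW => a La; split => [i a_band|no_band].
  by apply: band_densityE => //; split.
by apply: band_density0 => i [_]; exact: no_band.
Qed.
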